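(* Let $N_1,N_2$ be continuous fuzzy negations and $U_1,U_2$ disjunctive uninorms with neutral elements $e_1,e_2\in\,]0,1[$ respectively, and suppose $U_1(N_1(x),y)=U_2(N_2(x),y)$ for all $x,y\in[0,1]$. If $e_1\neq e_2$ or $N_1\neq N_2$ or $U_1\neq U_2$, then: (i) $e_1\neq e_2$, $N_1\neq N_2$ and $U_1\neq U_2$; (ii) the function $f_1:[0,1]\to[0,1]$, $f_1(x)=U_1(x,e_2)$, is continuous and non-decreasing with $f_1(0)=0$ and $f_1(1)=1$; (iii) the function $f_2:[0,1]\to[0,1]$, $f_2(x)=U_2(x,e_1)$, is continuous and non-decreasing with $f_2(0)=0$ and $f_2(1)=1$.
   Context: A fuzzy negation is a non-increasing map $N:[0,1]\to[0,1]$ with $N(0)=1$, $N(1)=0$. A uninorm is a map $U:[0,1]^2\to[0,1]$ that is commutative, associative, non-decreasing in each variable, and has a neutral element $e\in[0,1]$. A uninorm is disjunctive if $U(1,0)=1$. *)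

(* functions R -> R on an abstract R : realType,
   only their behaviour on [0,1] matters. *)
From HB Require Import structures.
From mathcomp Require Import all_boot all_order all_algebra.
From mathcomp Require Import all_classical all_reals topology normedtype.
Set Implicit Arguments. Unset Strict Implicit. Unset Printing Implicit Defensive.
Import Order.TTheory GRing.Theory Num.Theory.
Import numFieldNormedType.Exports.
Local Open Scope classical_set_scope.
Local Open Scope ring_scope.

Section Fuzzy.
Variable R : realType.

Definition in01 (x : R) : Prop := 0 <= x <= 1.

Definition fuzzy_negation (N : R -> R) : Prop :=
  [/\ (forall x, in01 x -> in01 (N x)),
      N 0 = 1, N 1 = 0 &
      (forall x y, in01 x -> in01 y -> x <= y -> N y <= N x)].

Definition uninorm (U : R -> R -> R) (e : R) : Prop :=
  in01 e /\
  (forall x y1 y2, in01 x -> in01 y1 -> in01 y2 -> y1 <= y2 -> U x y1 <= U x y2) /\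
  [/\ (forall x y, in01 x -> in01 y -> in01 (U x y)),
      (forall x y, in01 x -> in01 y -> U x y = U y x),
      (forall x y z, in01 x -> in01 y -> in01 z -> U x (U y z) = U (U x y) z),
      (forall x1 x2 y, in01 x1 -> in01 x2 -> in01 y -> x1 <= x2 -> U x1 y <= U x2 y) &
      (forall x, in01 x -> U e x = x)].

Definition disjunctive (U : R -> R -> R) : Prop := U 1 0 = 1.

Definition neq01 (f g : R -> R) : Prop := exists x, in01 x /\ f x <> g x.
Definition neq01_2 (U V : R -> R -> R) : Prop :=
  exists x y, [/\ in01 x, in01 y & U x y <> V x y].

Definition nondecreasing01 (f : R -> R) : Prop :=
  forall x y, in01 x -> in01 y -> x <= y -> f x <= f y.

Definition continuous01 (f : R -> R) : Prop :=
  {within `[0%R, 1%R], continuous f}.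

End Fuzzy.

(* Putting y := e1 and y := e2 in U1 (N1 x) y = U2 (N2 x) y gives
   U2 (N2 x) e1 = N1 x and U1 (N1 x) e2 = N2 x.  Hence e1 = e2 forces N1 = N2,
   N1 = N2 forces U1 = U2 (N1 is onto [0,1] by the intermediate value theorem),
   and U1 = U2 forces e1 = e2; so one of the three equalities failing makes all
   fail.  Moreover x |-> U1 x e2 sends the continuous negation N1 onto the
   continuous negation N2: it is non-decreasing and onto [0,1], hence
   continuous, and takes 0 to 0 and 1 to 1; symmetrically for x |-> U2 x e1. *)
From HB Require Import structures.
From mathcomp Require Import all_boot all_order all_algebra.
From mathcomp Require Import all_classical all_reals topology normedtype realfun.
From mathcomp Require Import lra.
Set Implicit Arguments. Unset Strict Implicit. Unset Printing Implicit Defensive.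
Import Order.TTheory GRing.Theory Num.Theory.
Import numFieldNormedType.Exports.
Local Open Scope ring_scope.
Local Open Scope classical_set_scope.

Lemma in01_0 (R : realType) : in01 (0 : R).
Proof. by rewrite /in01 lexx ler01. Qed.

Lemma in01_1 (R : realType) : in01 (1 : R).
Proof. by rewrite /in01 lexx ler01. Qed.

Lemma in01_compl {R : realType} {x : R} : in01 x -> in01 (1 - x).
Proof. by move=> /andP[x0 x1]; apply/andP; lra. Qed.

Lemma neq01N (R : realType) (f g : R -> R) :
  ~ neq01 f g -> forall x, in01 x -> f x = g x.
Proof. by move=> nfg x x01; apply: contra_notP nfg => fgx; exists x. Qed.

Lemma neq01_2N (R : realType) (U V : R -> R -> R) :
  ~ neq01_2 U V -> forall x y, in01 x -> in01 y -> U x y = V x y.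
Proof. by move=> nUV x y x01 y01; apply: contra_notP nUV => Uxy; exists x, y. Qed.

Section NondecreasingOnto.
Variable R : realType.

Definition maps01 (f : R -> R) := forall t, in01 t -> in01 (f t).
Definition onto01 (f : R -> R) := forall v, in01 v -> exists2 s, in01 s & f s = v.

Lemma nondecreasing_onto01_right_bound {f : R -> R} :
  maps01 f -> nondecreasing01 f -> onto01 f ->
  forall x eps, in01 x -> 0 < eps ->
  exists2 d, 0 < d & forall t, in01 t -> x <= t < x + d -> f t < f x + eps.
Proof.
move=> f01 fnd fonto x eps x01 eps0.
have /andP[fx0 fx1] := f01 x x01.
have [fx_big|fx_small] := ltP (1 - eps) (f x).
  exists 1 => // t t01 _; have /andP[_ ft1] := f01 t t01; lra.
have v01 : in01 (f x + eps / 2) by apply/andP; split; lra.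
have [s s01 fs] := fonto _ v01.
have xs : x < s.
  by rewrite ltNge; apply/negP => sx; have := fnd _ _ s01 x01 sx; lra.
exists (s - x); first lra.
move=> t t01 /andP[_ ts]; have ts' : t <= s by lra.
have := fnd _ _ t01 s01 ts'; lra.
Qed.

(* The left bound is the right bound for the reflected map t |-> 1 - f (1 - t). *)
Lemma nondecreasing_onto01_left_bound {f : R -> R} :
  maps01 f -> nondecreasing01 f -> onto01 f ->
  forall x eps, in01 x -> 0 < eps ->
  exists2 d, 0 < d & forall t, in01 t -> x - d < t <= x -> f x - eps < f t.
Proof.
move=> f01 fnd fonto x eps x01 eps0.
pose g t := 1 - f (1 - t).
have g01 : maps01 g by move=> t /in01_compl /f01 /in01_compl.
have gnd : nondecreasing01 g.
  move=> s t /in01_compl s01 /in01_compl t01 st.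
  by rewrite lerD2l lerN2 fnd // lerD2l lerN2.
have gonto : onto01 g.
  move=> v /in01_compl /fonto [s s01 fs].
  by exists (1 - s); [exact: in01_compl | rewrite /g subKr fs subKr].
have [d d0 hd] := nondecreasing_onto01_right_bound g01 gnd gonto
  (in01_compl x01) eps0.
exists d => // t t01 /andP[tl tr].
have /andP[_ t1] := t01.
have := hd (1 - t) (in01_compl t01); rewrite /g !subKr.
have -> : 1 - x <= 1 - t < 1 - x + d by apply/andP; lra.
by move/(_ isT); lra.
Qed.

Lemma nondecreasing_onto01_continuous (f : R -> R) :
  maps01 f -> nondecreasing01 f -> onto01 f -> continuous01 f.
Proof.
move=> f01 fnd fonto.
apply/subspace_continuousP => x /=; rewrite in_itv /= => x01.
apply/cvgrPdist_lt => eps eps0.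
have [dl dl0 hl] := nondecreasing_onto01_left_bound f01 fnd fonto x01 eps0.
have [dr dr0 hr] := nondecreasing_onto01_right_bound f01 fnd fonto x01 eps0.
apply/nbhs_ballP; exists (Num.min dl dr) => /=; first by rewrite lt_min dl0 dr0.
move=> t; rewrite /ball /= lt_min => /andP[tdl tdr]; rewrite in_itv /= => t01.
move: tdl tdr; rewrite /= !(@ltr_distlC R) => /andP[tl _] /andP[_ tr].
change (f x - eps < f t < f x + eps).
have [tx|xt] := lerP t x.
- have := fnd _ _ t01 x01 tx; have := hl t t01; rewrite tl tx => /(_ isT); lra.
- have := fnd _ _ x01 t01 (ltW xt); have := hr t t01.
  by rewrite tr (ltW xt) => /(_ isT); lra.
Qed.

End NondecreasingOnto.

Lemma fuzzy_negation_maps01 (R : realType) (N : R -> R) :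
  fuzzy_negation N -> maps01 N.
Proof. by case. Qed.

Lemma continuous_negation_onto01 (R : realType) (N : R -> R) :
  fuzzy_negation N -> continuous01 N -> onto01 N.
Proof.
move=> [_ N0 N1 _] cN v v01.
have [|c c01 Nc] := @IVT R N 0 1 v ler01 cN.
  by rewrite N0 N1 /Num.min /Num.max ltr10.
by exists c => //; move: c01; rewrite in_itv.
Qed.

Lemma uninorm_transport_negation (R : realType) (U : R -> R -> R) (e a : R)
    (N N' : R -> R) :
  uninorm U e -> in01 a -> fuzzy_negation N -> fuzzy_negation N' ->
  continuous01 N' -> (forall x, in01 x -> U (N x) a = N' x) ->
  [/\ continuous01 (fun x => U x a), nondecreasing01 (fun x => U x a),
      U 0 a = 0 & U 1 a = 1].
Proof.
move=> [_ [_ [U01 _ _ Umono _]]] a01 fN fN' cN' UNa.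
have [_ N0 N1 _] := fN; have [_ N'0 N'1 _] := fN'.
have Ua_mono : nondecreasing01 (fun x => U x a) by move=> x y x01 y01; apply: Umono.
split=> //.
- apply: nondecreasing_onto01_continuous => //; first by move=> x x01; apply: U01.
  move=> v /(continuous_negation_onto01 fN' cN') [x x01 <-].
  by exists (N x); [apply: fuzzy_negation_maps01 | apply: UNa].
- by have := UNa 1 (in01_1 R); rewrite N1 N'1.
- by have := UNa 0 (in01_0 R); rewrite N0 N'0.
Qed.

Lemma uninorm_neutral_unique (R : realType) (U V : R -> R -> R) (e e' : R) :
  uninorm U e -> uninorm V e' ->
  (forall x y, in01 x -> in01 y -> U x y = V x y) -> e = e'.
Proof.
move=> [e01 [_ [_ _ _ _ Ue]]] [e'01 [_ [_ Vcomm _ _ Ve']]] UV.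
by rewrite -[e'](Ue e' e'01) UV // Vcomm // Ve'.
Qed.

Lemma uninorm_neutral_r (R : realType) (U : R -> R -> R) (e : R) :
  uninorm U e -> forall x, in01 x -> U x e = x.
Proof. by move=> [e01 [_ [_ Ucomm _ _ Ue]]] x x01; rewrite Ucomm ?Ue. Qed.

Section NegationsLinkedByUninorms.
Variables (R : realType) (N1 N2 : R -> R) (U1 U2 : R -> R -> R) (e1 e2 : R).
Hypotheses (fN1 : fuzzy_negation N1) (cN1 : continuous01 N1).
Hypothesis fN2 : fuzzy_negation N2.
Hypotheses (uU1 : uninorm U1 e1) (uU2 : uninorm U2 e2).
Hypothesis U1N1_U2N2 : forall x y, in01 x -> in01 y -> U1 (N1 x) y = U2 (N2 x) y.

Lemma U1_N1_e2 x : in01 x -> U1 (N1 x) e2 = N2 x.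
Proof.
move=> x01; have [e2_01 _] := uU2.
by rewrite U1N1_U2N2 // (uninorm_neutral_r uU2 (fuzzy_negation_maps01 fN2 x01)).
Qed.

Lemma U2_N2_e1 x : in01 x -> U2 (N2 x) e1 = N1 x.
Proof.
move=> x01; have [e1_01 _] := uU1.
by rewrite -U1N1_U2N2 // (uninorm_neutral_r uU1 (fuzzy_negation_maps01 fN1 x01)).
Qed.

Lemma eq_neutral_eq_negation : e1 = e2 -> forall x, in01 x -> N1 x = N2 x.
Proof.
move=> e12 x x01.
by rewrite -U1_N1_e2 // -e12 (uninorm_neutral_r uU1 (fuzzy_negation_maps01 fN1 x01)).
Qed.

Lemma eq_negation_eq_uninorm : (forall x, in01 x -> N1 x = N2 x) ->
  forall x y, in01 x -> in01 y -> U1 x y = U2 x y.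
Proof.
move=> N12 x y /(continuous_negation_onto01 fN1 cN1) [s s01 <-] y01.
by rewrite U1N1_U2N2 // N12.
Qed.

Lemma linked_all_neq : e1 <> e2 \/ neq01 N1 N2 \/ neq01_2 U1 U2 ->
  [/\ e1 <> e2, neq01 N1 N2 & neq01_2 U1 U2].
Proof.
have e12_N12 := eq_neutral_eq_negation.
have N12_U12 := eq_negation_eq_uninorm.
have U12_e12 := uninorm_neutral_unique uU1 uU2.
move=> some_neq; have e12 : e1 <> e2.
  move=> e12; have N12 := e12_N12 e12.
  case: some_neq => [//|[[x [x01 N12x]]|[x [y [x01 y01 U12xy]]]]].
  - exact: N12x (N12 x x01).
  - exact: U12xy (N12_U12 N12 x y x01 y01).
split=> //.
- by apply: contra_notP e12 => /neq01N /N12_U12 /U12_e12.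
- by apply: contra_notP e12 => /neq01_2N /U12_e12.
Qed.

End NegationsLinkedByUninorms.

Theorem mainTheorem3 (R : realType) (N1 N2 : R -> R) (U1 U2 : R -> R -> R)
  (e1 e2 : R) :
  fuzzy_negation N1 -> continuous01 N1 ->
  fuzzy_negation N2 -> continuous01 N2 ->
  uninorm U1 e1 -> disjunctive U1 -> 0 < e1 < 1 ->
  uninorm U2 e2 -> disjunctive U2 -> 0 < e2 < 1 ->
  (forall x y, in01 x -> in01 y -> U1 (N1 x) y = U2 (N2 x) y) ->
  (e1 <> e2 \/ neq01 N1 N2 \/ neq01_2 U1 U2) ->
  [/\ e1 <> e2 /\ neq01 N1 N2 /\ neq01_2 U1 U2,
      continuous01 (fun x => U1 x e2) /\ nondecreasing01 (fun x => U1 x e2)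
        /\ U1 0 e2 = 0 /\ U1 1 e2 = 1 &
      continuous01 (fun x => U2 x e1) /\ nondecreasing01 (fun x => U2 x e1)
        /\ U2 0 e1 = 0 /\ U2 1 e1 = 1].
Proof.
move=> fN1 cN1 fN2 cN2 uU1 _ _ uU2 _ _ U1N1_U2N2 some_neq.
have [e12 N12 U12] := linked_all_neq fN1 cN1 fN2 uU1 uU2 U1N1_U2N2 some_neq.
have [e1_01 _] := uU1; have [e2_01 _] := uU2.
have [cU1 ndU1 U1_0 U1_1] := uninorm_transport_negation uU1 e2_01 fN1 fN2 cN2
  (U1_N1_e2 fN2 uU2 U1N1_U2N2).
have [cU2 ndU2 U2_0 U2_1] := uninorm_transport_negation uU2 e1_01 fN2 fN1 cN1
  (U2_N2_e1 fN1 uU1 U1N1_U2N2).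
by [].
Qed.
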